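(* Let $\mathcal{A}$ be a $k$-linear, Hom-finite additive category and $n\in\mathbb{Z}_{\geq0}\cup\{\infty\}$. Assume $\mathrm{D}\mathcal{A}(X,-)\in\mathrm{mod}_{n}\mathcal{A}$ for every $X\in\mathcal{A}$. Then for every $i\in\mathbb{Z}$ the restriction functor $\rho_i:\mathrm{Mod}\,\mathsf{R}\mathcal{A}\to\mathrm{Mod}\,\mathcal{A}_i$ restricts to a functor $\mathrm{mod}_n\mathsf{R}\mathcal{A}\to\mathrm{mod}_n\mathcal{A}_i$.
   Context: $k$ a field, $\mathrm{D}=\mathrm{Hom}_k(-,k)$ applied pointwise. Modules over an additive category $\mathcal{C}$ are contravariant additive functors $\mathcal{C}\to\mathrm{Ab}$; $\mathrm{proj}\,\mathcal{C}$ = finitely generated projective modules (direct summands of representables). For $n\ge0$, $\mathrm{mod}_n\mathcal{C}$ is the full subcategory of modules $M$ with an exact sequence $P_n\to\cdots\to P_0\to M\to0$, $P_i\in\mathrm{proj}\,\mathcal{C}$; $\mathrm{mod}\,\mathcal{C}=\mathrm{mod}_\infty\mathcal{C}$ those with an infinite such resolution. Repetitive category $\mathsf{R}\mathcal{A}$: generated by objects $(X,i)$, $X\in\mathcal{A},i\in\mathbb{Z}$, with $\mathsf{R}\mathcal{A}((X,i),(Y,j))=\mathcal{A}(X,Y)$ if $i=j$, $\mathrm{D}\mathcal{A}(Y,X)$ if $j=i+1$, $0$ otherwise; same-degree composition is that of $\mathcal{A}$, composition with a degree-raising map uses the $\mathcal{A}$-bimodule structure of $\mathrm{D}\mathcal{A}$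 (for $f\in\mathcal{A}(X,Y)$, $g\in\mathrm{D}\mathcal{A}(Z,Y)$: $g\circ f=\mathrm{D}\mathcal{A}(Z,f)(g)$; for $f\in\mathrm{D}\mathcal{A}(Y,X)$, $g\in\mathcal{A}(Y,Z)$: $g\circ f=\mathrm{D}\mathcal{A}(g,X)(f)$), and two degree-raising maps compose to $0$. $\mathcal{A}_i=\mathrm{add}\{(X,i):X\in\mathcal{A}\}\cong\mathcal{A}$ and $\rho_i$ is restriction of $\mathsf{R}\mathcal{A}$-modules to $\mathcal{A}_i$. *)

From HB Require Import structures.
From mathcomp Require Import all_boot all_order all_algebra.
Unset Implicit Arguments. Unset Strict Implicit. Unset Printing Implicit Defensive.
Import GRing.Theory.
Local Open Scope ring_scope.

(* k-linear Hom-finite categories: Hom spaces are finite-dimensional   *)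
(* k-vector spaces (vectType k), composition k-bilinear.              *)
Record kcat (k : fieldType) := KCat {
  ob : Type;
  hom : ob -> ob -> vectType k;
  comp : forall X Y Z : ob, hom Y Z -> hom X Y -> hom X Z;
  idm : forall X : ob, hom X X }.
Arguments ob {k} _.
Arguments hom {k} _ _ _.
Arguments comp {k} _ {X Y Z}.
Arguments idm {k} _ X.

Definition is_klinear_cat (k : fieldType) (A : kcat k) : Prop :=
  [/\ (forall (X Y Z W : ob A) (h : hom A Z W) (g : hom A Y Z) (f : hom A X Y),
         comp A h (comp A g f) = comp A (comp A h g) f),
      (forall (X Y : ob A) (f : hom A X Y), comp A (idm A Y) f = f),
      (forall (X Y : ob A) (f : hom A X Y), comp A f (idm A X) = f),
      (forall (X Y Z : ob A) (a : k) (g g' : hom A Y Z) (f : hom A X Y),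
         comp A (a *: g + g') f = a *: comp A g f + comp A g' f) &
      (forall (X Y Z : ob A) (a : k) (g : hom A Y Z) (f f' : hom A X Y),
         comp A g (a *: f + f') = a *: comp A g f + comp A g f')].

Definition is_additive_kcat (k : fieldType) (A : kcat k) : Prop :=
  (exists Z : ob A, idm A Z = 0) /\
  forall X Y : ob A, exists (S : ob A) (i1 : hom A X S) (i2 : hom A Y S)
                            (p1 : hom A S X) (p2 : hom A S Y),
    [/\ comp A p1 i1 = idm A X, comp A p2 i2 = idm A Y,
        comp A p1 i2 = 0, comp A p2 i1 = 0 &
        comp A i1 p1 + comp A i2 p2 = idm A S].

Record precat := PreCat {
  pob : Type;
  phom : pob -> pob -> zmodType;
  pcomp : forall X Y Z : pob, phom Y Z -> phom X Y -> phom X Z;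
  pid : forall X : pob, phom X X }.
Arguments pcomp {_ X Y Z}.
Arguments pid {_} X.

Record pmod (C : precat) := PMod {
  mob : pob C -> zmodType;
  mact : forall X Y : pob C, phom C X Y -> mob Y -> mob X }.
Arguments mob {C} _ _.
Arguments mact {C} _ {X Y}.

Definition is_module (C : precat) (M : pmod C) : Prop :=
  [/\ (forall (X Y : pob C) (f g : phom C X Y) (m : mob M Y),
         mact M (f + g) m = mact M f m + mact M g m),
      (forall (X Y : pob C) (f : phom C X Y) (m m' : mob M Y),
         mact M f (m + m') = mact M f m + mact M f m'),
      (forall (X : pob C) (m : mob M X), mact M (pid X) m = m) &
      (forall (X Y Z : pob C) (g : phom C Y Z) (f : phom C X Y) (m : mob M Z),
         mact M (pcomp g f) m = mact M f (mact M g m))].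
Arguments is_module {C} M.

Definition natt (C : precat) (M N : pmod C) := forall X : pob C, mob M X -> mob N X.
Arguments natt {C} M N.

Definition is_natt (C : precat) (M N : pmod C) (t : natt M N) : Prop :=
  (forall (X : pob C) (m m' : mob M X), t X (m + m') = t X m + t X m') /\
  (forall (X Y : pob C) (f : phom C X Y) (m : mob M Y),
     t X (mact M f m) = mact N f (t Y m)).
Arguments is_natt {C M N} t.

Definition repr (C : precat) (Z : pob C) : pmod C :=
  @PMod C (fun Y => phom C Y Z) (fun X Y (f : phom C X Y) (g : phom C Y Z) => pcomp g f).
Arguments repr {C} Z.

(* finitely generated projective: direct summand of a finite direct sum of
   representables, written out with the coordinate maps of the sum *)
Definition is_fgproj (C : precat) (P : pmod C) : Prop :=
  is_module P /\
  exists (m : nat) (Xs : 'I_m -> pob C)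
         (s : forall j, natt P (repr (Xs j))) (r : forall j, natt (repr (Xs j)) P),
    (forall j, is_natt (s j) /\ is_natt (r j)) /\
    (forall (Y : pob C) (x : mob P Y), \sum_(j < m) r j Y (s j Y x) = x).
Arguments is_fgproj {C} P.

Inductive natinf := NFin of nat | NInf.
Definition ltn_inf (a : nat) (n : natinf) : bool :=
  match n with NFin m => (a < m)%N | NInf => true end.
Definition len_inf (a : nat) (n : natinf) : bool :=
  match n with NFin m => (a <= m)%N | NInf => true end.

(* mod_n C : there is an exact sequence P_n -> ... -> P_0 -> M -> 0
   (P_k -> P_{k-1} is d k.-1, P_0 -> M is e); for n = NInf an infinite one *)
Definition in_mod (C : precat) (n : natinf) (M : pmod C) : Prop :=
  is_module M /\
  exists (P : nat -> pmod C) (d : forall k : nat, natt (P k.+1) (P k)) (e : natt (P 0%N) M),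
    (forall k, len_inf k n -> is_fgproj (P k)) /\
    (forall k, ltn_inf k n -> is_natt (d k)) /\
    is_natt e /\
    (forall (Y : pob C) (x : mob M Y), exists y, e Y y = x) /\
    (ltn_inf 0 n -> forall (Y : pob C) (x : mob (P 0%N) Y),
        e Y x = 0 <-> exists y, d 0%N Y y = x) /\
    (forall k, ltn_inf k.+1 n -> forall (Y : pob C) (x : mob (P k.+1) Y),
        d k Y x = 0 <-> exists y, d k.+1 Y y = x).
Arguments in_mod {C} n M.

Definition precat_of (k : fieldType) (A : kcat k) : precat :=
  @PreCat (ob A) (fun X Y => hom A X Y : zmodType)
          (fun X Y Z g f => comp A g f) (fun X => idm A X).
Arguments precat_of {k} A.

Definition dualrep (k : fieldType) (A : kcat k) (X : ob A) : pmod (precat_of A) :=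
  @PMod (precat_of A) (fun Y => 'Hom(hom A X Y, k^o) : zmodType)
    (fun Y' Y (f : hom A Y' Y) (phi : 'Hom(hom A X Y, k^o)) =>
       linfun (fun g : hom A X Y' => phi (comp A f g))).
Arguments dualrep {k A} X.

(* A morphism (X,i) -> (Y,j) is stored in the ambient space             *)
(* A(X,Y) x D A(Y,X); the actual Hom space is the subspace               *)
(*   A(X,Y) x 0 if j = i, 0 x D A(Y,X) if j = i+1, 0 otherwise.           *)
Section Repetitive.
Variables (k : fieldType) (A : kcat k).
Local Notation pA := (@precat_of k A).

Definition amb (X Y : ob A) : vectType k :=
  (hom A X Y * 'Hom(hom A Y X, k^o))%type.

Definition rsp (X Y : ob A) (i j : int) : {vspace amb X Y} :=
  if i == j then lker (linfun (fun p : amb X Y => p.2))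
  else if j == i + 1 then lker (linfun (fun p : amb X Y => p.1))
  else 0%VS.

Definition homR (U V : ob A * int) : vectType k := subvs_of (rsp U.1 V.1 U.2 V.2).

Definition ambcomp (X Y Z : ob A) (g : amb Y Z) (f : amb X Y) : amb X Z :=
  (comp A g.1 f.1,
   linfun (fun h : hom A Z X => g.2 (comp A f.1 h))
   + linfun (fun h : hom A Z X => f.2 (comp A h g.1))).

Definition compR (U V W : ob A * int) (g : homR V W) (f : homR U V) : homR U W :=
  vsproj (rsp U.1 W.1 U.2 W.2) (ambcomp U.1 V.1 W.1 (vsval g) (vsval f)).

Definition idR (U : ob A * int) : homR U U :=
  vsproj (rsp U.1 U.1 U.2 U.2) (idm A U.1, 0).

Definition RA : precat :=
  @PreCat (ob A * int)%type (fun U V => homR U V : zmodType) compR idR.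

Definition RAi (i : int) : precat :=
  @PreCat (ob A) (fun X Y => homR (X, i) (Y, i) : zmodType)
    (fun X Y Z g f => compR (X, i) (Y, i) (Z, i) g f) (fun X => idR (X, i)).

Definition rho (i : int) (M : pmod RA) : pmod (RAi i) :=
  @PMod (RAi i) (fun X => mob M (X, i))
    (fun X Y (f : homR (X, i) (Y, i)) (m : mob M (Y, i)) => @mact RA M (X, i) (Y, i) f m).

End Repetitive.
Arguments is_klinear_cat {k} A.
Arguments is_additive_kcat {k} A.
Arguments RA {k} A.
Arguments RAi {k} A i.
Arguments rho {k A} i M.

(* The restriction rho_i is exact, so it carries a projective resolution P_* -> M of an
   R A-module to an exact sequence rho_i P_* -> rho_i M.  Each P_k is a summand of a finite sum
   of representables R A(-, (Y, j)), whose restrictions are A(-, Y) for j = i, D A(Y, -) for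
   j = i + 1 and 0 otherwise; by hypothesis all of them lie in mod_n.  It remains to see that,
   over any preadditive category, mod_n is closed under extensions (horseshoe lemma) and direct
   summands, and contains every M with an exact sequence X_n -> ... -> X_0 -> M -> 0 whose terms
   lie in mod_n: the kernel of X_0 -> M lies in mod_(n-1) by induction, and a quotient of a
   module in mod_n by a submodule in mod_(n-1) lies in mod_n.  The case n = infinity reduces to
   the finite ones, using Schanuel's lemma to choose the successive syzygies. *)

From HB Require Import structures.
From mathcomp Require Import all_boot all_order all_algebra.
From Stdlib Require Import IndefiniteDescription.

Import GRing.Theory.
Local Open Scope ring_scope.

Definition is_additive {V W : zmodType} (f : V -> W) := forall x y, f (x + y) = f x + f y.

Section AdditiveMap.
Context {V W : zmodType} {f : V -> W}.
Hypothesis fD : is_additive f.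

Lemma addf0 : f 0 = 0.
Proof. by apply: (addrI (f 0)); rewrite -fD !addr0. Qed.

Lemma addfN x : f (- x) = - f x.
Proof. by apply/eqP; rewrite -addr_eq0 -fD addNr addf0. Qed.

Lemma addfB x y : f (x - y) = f x - f y.
Proof. by rewrite fD addfN. Qed.

Lemma addf_sum m (F : 'I_m -> V) : f (\sum_(j < m) F j) = \sum_(j < m) f (F j).
Proof. exact: (big_morph f fD addf0). Qed.

End AdditiveMap.

Definition kerT {V W : zmodType} {f : V -> W} (fD : is_additive f) := {x : V | f x == 0}.

Section KernelType.
Context {V W : zmodType} {f : V -> W} (fD : is_additive f).
Local Notation K := (kerT fD).
HB.instance Definition _ := Choice.on K.

Lemma ker_closed0 : f 0 == 0. Proof. by rewrite (addf0 fD). Qed.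
Lemma ker_closedD (a b : K) : f (sval a + sval b) == 0.
Proof. by rewrite fD (eqP (svalP a)) (eqP (svalP b)) addr0. Qed.
Lemma ker_closedN (a : K) : f (- sval a) == 0.
Proof. by rewrite (addfN fD) (eqP (svalP a)) oppr0. Qed.

Definition ker0 : K := exist (fun x => f x == 0) 0 ker_closed0.
Definition kerD (a b : K) : K := exist (fun x => f x == 0) _ (ker_closedD a b).
Definition kerN (a : K) : K := exist (fun x => f x == 0) _ (ker_closedN a).

Lemma kerDA : associative kerD. Proof. by move=> a b c; apply: val_inj; rewrite /= addrA. Qed.
Lemma kerDC : commutative kerD. Proof. by move=> a b; apply: val_inj; rewrite /= addrC. Qed.
Lemma ker0D : left_id ker0 kerD. Proof. by move=> a; apply: val_inj; rewrite /= add0r. Qed.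
Lemma kerND : left_inverse ker0 kerN kerD.
Proof. by move=> a; apply: val_inj; rewrite /= addNr. Qed.
HB.instance Definition _ := GRing.isZmodule.Build K kerDA kerDC ker0D kerND.

Lemma sval_ker_inj (a b : K) : sval a = sval b -> a = b.
Proof. exact: val_inj. Qed.

Lemma sval_kerD (a b : K) : sval (a + b) = sval a + sval b.
Proof. by []. Qed.

Lemma kerP (a : K) : f (sval a) = 0. Proof. exact/eqP/(svalP a). Qed.

Lemma ker_eq0 (a : K) : (a = 0) <-> (sval a = 0).
Proof. by split=> [->|h] //; apply: val_inj. Qed.

Lemma ker_sub_closed x : f (if f x == 0 then x else 0) == 0.
Proof. by case: ifP => // _; exact: ker_closed0. Qed.
Definition insker x : K := exist (fun x => f x == 0) _ (ker_sub_closed x).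

Lemma inskerK x : f x = 0 -> sval (insker x) = x.
Proof. by move=> h; rewrite /= h eqxx. Qed.

End KernelType.
Arguments sval_ker_inj {V W f fD}.
Arguments sval_kerD {V W f fD}.
Arguments kerP {V W f fD}.
Arguments ker_eq0 {V W f fD}.
Arguments inskerK {V W f} fD {x}.

Lemma pairD (U V : zmodType) (a c : U) (b d : V) :
  (a, b) + (c, d) = (a + c, b + d) :> (U * V)%type.
Proof. by []. Qed.

Lemma sum_pair (U V : zmodType) n (F : 'I_n -> U) (G : 'I_n -> V) :
  \sum_(j < n) ((F j, G j) : (U * V)%type) = (\sum_(j < n) F j, \sum_(j < n) G j).
Proof. by elim/big_rec3: _ => //= j a b [c d] _ ->. Qed.

Definition leinf (m n : natinf) : bool :=
  match m, n with
  | _, NInf => true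
  | NFin a, NFin b => (a <= b)%N
  | NInf, NFin _ => false
  end.

Lemma leinf_len {m n k} : leinf m n -> len_inf k m -> len_inf k n.
Proof. by case: m => [a|]; case: n => [b|] //= hab hk; apply: leq_trans hk hab. Qed.

Lemma leinf_ltn {m n k} : leinf m n -> ltn_inf k m -> ltn_inf k n.
Proof. by case: m => [a|]; case: n => [b|] //= hab hk; apply: leq_trans hk hab. Qed.

Section Modules.
Context {C : precat}.
Implicit Types M N P : pmod C.

Section ModuleTheory.
Context {M : pmod C}.
Hypothesis HM : is_module M.

Lemma mactDl {X Y} (f g : phom C X Y) m : mact M (f + g) m = mact M f m + mact M g m.
Proof. by case: HM => h _ _ _; exact: h. Qed.
Lemma mactD {X Y} (f : phom C X Y) : is_additive (mact M f).
Proof. by case: HM => _ h _ _; exact: h. Qed.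
Lemma mact1 {X} m : mact M (pid X) m = m.
Proof. by case: HM => _ _ h _; exact: h. Qed.
Lemma mactM {X Y Z} (g : phom C Y Z) (f : phom C X Y) m :
  mact M (pcomp g f) m = mact M f (mact M g m).
Proof. by case: HM => _ _ _ h; exact: h. Qed.
Lemma mact0 {X Y} (f : phom C X Y) : mact M f 0 = 0.
Proof. exact: (addf0 (mactD f)). Qed.
Lemma mactB {X Y} (f : phom C X Y) (m m' : mob M Y) : mact M f (m - m') = mact M f m - mact M f m'.
Proof. exact: (addfB (mactD f)). Qed.
Lemma mact_sum {X Y} (f : phom C X Y) n (F : 'I_n -> mob M Y) :
  mact M f (\sum_(j < n) F j) = \sum_(j < n) mact M f (F j).
Proof. exact: (addf_sum (mactD f)). Qed.

End ModuleTheory.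

Section NattTheory.
Context {M N : pmod C} {t : natt M N}.
Hypothesis Ht : is_natt t.

Lemma nattD X : is_additive (t X). Proof. exact: (proj1 Ht). Qed.
Lemma natt0 X : t X 0 = 0. Proof. exact: (addf0 (nattD X)). Qed.
Lemma nattN {X} (m : mob M X) : t X (- m) = - t X m. Proof. exact: (addfN (nattD X)). Qed.
Lemma nattB {X} (m m' : mob M X) : t X (m - m') = t X m - t X m'.
Proof. exact: (addfB (nattD X)). Qed.
Lemma natt_sum {X n} (F : 'I_n -> mob M X) : t X (\sum_(j < n) F j) = \sum_(j < n) t X (F j).
Proof. exact: (addf_sum (nattD X)). Qed.
Lemma nattC {X Y} (f : phom C X Y) m : t X (mact M f m) = mact N f (t Y m).
Proof. exact: (proj2 Ht). Qed.

End NattTheory.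

Definition natt_surj {M N} (t : natt M N) := forall Y x, exists y, t Y y = x.
Definition natt_inj {M N} (t : natt M N) := forall Y x, t Y x = 0 -> x = 0.
Definition exact_at {M N P} (t : natt M N) (u : natt N P) :=
  forall Y x, u Y x = 0 <-> exists y, t Y y = x.
Definition is_ses {M N P} (t : natt M N) (u : natt N P) :=
  [/\ is_natt t, is_natt u, natt_inj t, natt_surj u & exact_at t u].

Definition ncomp {M N P} (u : natt N P) (t : natt M N) : natt M P := fun Y x => u Y (t Y x).

Lemma ncomp_natt {M N P} {u : natt N P} {t : natt M N} :
  is_natt u -> is_natt t -> is_natt (ncomp u t).
Proof.
move=> Hu Ht; split=> [Y m m'|X Y f m]; rewrite /ncomp.
  by rewrite (nattD Ht) (nattD Hu).
by rewrite (nattC Ht) (nattC Hu).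
Qed.

Lemma ncomp_surj {M N P} {u : natt N P} {t : natt M N} :
  natt_surj u -> natt_surj t -> natt_surj (ncomp u t).
Proof. by move=> Hu Ht Y x; have [y <-] := Hu Y x; have [z <-] := Ht Y y; exists z. Qed.

Lemma natt_surj_module {M N} {t : natt M N} :
  is_module M -> is_natt t -> natt_surj t -> is_module N.
Proof.
move=> HM Ht Hs; split.
- by move=> X Y f g m; have [x <-] := Hs Y m; rewrite -!(nattC Ht) (mactDl HM) (nattD Ht).
- move=> X Y f m m'; have [x <-] := Hs Y m; have [x' <-] := Hs Y m'.
  by rewrite -(nattD Ht) -!(nattC Ht) (mactD HM) (nattD Ht).
- by move=> X m; have [x <-] := Hs X m; rewrite -(nattC Ht) (mact1 HM).
- by move=> X Y Z g f m; have [x <-] := Hs Z m; rewrite -!(nattC Ht) (mactM HM).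
Qed.

Definition zero_natt M N : natt M N := fun Y x => 0.

Lemma zero_natt_natt {M N} : is_module N -> is_natt (zero_natt M N).
Proof. by move=> HN; split=> [Y m m'|X Y f m]; rewrite /zero_natt ?addr0 ?(mact0 HN). Qed.

Definition exseq n {X : nat -> pmod C} (d : forall k, natt (X k.+1) (X k)) {N}
    (e : natt (X 0%N) N) :=
  [/\ forall k, ltn_inf k n -> is_natt (d k), is_natt e, natt_surj e,
      ltn_inf 0 n -> exact_at (d 0%N) e &
      forall k, ltn_inf k.+1 n -> exact_at (d k.+1) (d k)].

Lemma in_modE n N : in_mod n N <->
  is_module N /\ exists X d e, (forall k, len_inf k n -> is_fgproj (X k)) /\ @exseq n X d N e.
Proof.
split=> [[HN [X [d [e [hX [Hd [He [Hs [H0 Hk]]]]]]]]]|[HN [X [d [e [hX [Hd He Hs H0 Hk]]]]]]].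
  by split=> //; exists X, d, e.
by split=> //; exists X, d, e.
Qed.

End Modules.

Section KernelModule.
Context {C : precat} {M N : pmod C} {t : natt M N}.
Variable Ht : is_natt t.

Definition kermod : pmod C :=
  @PMod C (fun X => (kerT (nattD Ht X) : zmodType))
    (fun X Y f m => insker (nattD Ht X) (mact M f (sval m))).

Definition kerinc : natt kermod M := fun X m => sval m.

Definition kerlift {Q : pmod C} (u : natt Q M) : natt Q kermod :=
  fun X q => insker (nattD Ht X) (u X q).

Lemma kerliftK {Q} (u : natt Q M) {X} q : t X (u X q) = 0 -> sval (kerlift u X q) = u X q.
Proof. exact: inskerK. Qed.

Hypothesis HN : is_module N.

Lemma kermod_act {X Y} (f : phom C X Y) m : sval (mact kermod f m) = mact M f (sval m).
Proof. by apply: inskerK; rewrite (nattC Ht) (kerP m) (mact0 HN). Qed.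

Lemma kermod_module : is_module M -> is_module kermod.
Proof.
move=> HM; split=> [X Y f g m|X Y f m m'|X m|X Y Z g f m];
  apply: sval_ker_inj; rewrite ?sval_kerD !kermod_act.
- exact: (mactDl HM).
- by rewrite sval_kerD (mactD HM).
- exact: (mact1 HM).
- exact: (mactM HM).
Qed.
Lemma kerinc_natt : is_natt kerinc.
Proof. by split=> [//|X Y f m]; rewrite /kerinc kermod_act. Qed.

Lemma kerlift_natt {Q} {u : natt Q M} :
  is_natt u -> (forall X q, t X (u X q) = 0) -> is_natt (kerlift u).
Proof.
move=> Hu Hu0; split=> [Y m m'|X Y f m]; apply: sval_ker_inj.
  by rewrite sval_kerD !kerliftK ?Hu0 // (nattD Hu).
by rewrite kermod_act !kerliftK ?Hu0 // (nattC Hu).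
Qed.

End KernelModule.

Section Sums.
Context {C : precat}.
Implicit Types M N P : pmod C.

Definition zmod0 : pmod C := @PMod C (fun _ => ('I_1 : zmodType)) (fun X Y f m => m).

Lemma zmod0_eq X (x : mob zmod0 X) : x = 0.
Proof. by apply: val_inj; case: x => [[|]]. Qed.

Lemma zmod0_module : is_module zmod0.
Proof. by split=> //= X Y f g m; rewrite [m](zmod0_eq Y) addr0. Qed.

Lemma zmod0_fgproj : is_fgproj zmod0.
Proof.
split; first exact: zmod0_module.
have ord0_rect T : 'I_0 -> T by case.
exists 0%N, (ord0_rect _), (fun j => ord0_rect _ j), (fun j => ord0_rect _ j).
split=> [j|Y x]; first by case: (ord0_rect False j).
by rewrite big_ord0 [RHS](zmod0_eq Y).
Qed.

Definition msum M N : pmod C :=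
  @PMod C (fun X => ((mob M X * mob N X)%type : zmodType))
    (fun X Y f p => (mact M f p.1, mact N f p.2)).

Lemma msum_module {M N} : is_module M -> is_module N -> is_module (msum M N).
Proof.
move=> HM HN; split=> /= [X Y f g m|X Y f m m'|X [m m']|X Y Z g f m].
- by rewrite (mactDl HM) (mactDl HN).
- by rewrite (mactD HM) (mactD HN).
- by rewrite (mact1 HM) (mact1 HN).
- by rewrite (mactM HM) (mactM HN).
Qed.

Definition nfst M N : natt (msum M N) M := fun Y p => p.1.
Definition nsnd M N : natt (msum M N) N := fun Y p => p.2.
Definition ninl M N : natt M (msum M N) := fun Y x => (x, 0).
Definition ninr M N : natt N (msum M N) := fun Y x => (0, x).
Definition npair {P M N} (t : natt P M) (u : natt P N) : natt P (msum M N) :=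
  fun Y x => (t Y x, u Y x).
Definition ncopair {M N P} (t : natt M P) (u : natt N P) : natt (msum M N) P :=
  fun Y p => t Y p.1 + u Y p.2.

Lemma nfst_natt M N : is_natt (nfst M N). Proof. by split=> // Y [a b] [c d]. Qed.
Lemma nsnd_natt M N : is_natt (nsnd M N). Proof. by split=> // Y [a b] [c d]. Qed.

Lemma ninl_natt M N : is_module N -> is_natt (ninl M N).
Proof. by move=> HN; split=> [Y m m'|X Y f m]; rewrite /ninl /= ?pairD ?addr0 ?(mact0 HN). Qed.

Lemma ninr_natt M N : is_module M -> is_natt (ninr M N).
Proof. by move=> HM; split=> [Y m m'|X Y f m]; rewrite /ninr /= ?pairD ?addr0 ?(mact0 HM). Qed.

Lemma npair_natt {P M N} {t : natt P M} {u : natt P N} :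
  is_natt t -> is_natt u -> is_natt (npair t u).
Proof.
move=> Ht Hu; split=> [Y m m'|X Y f m]; rewrite /npair /=.
  by rewrite (nattD Ht) (nattD Hu).
by rewrite (nattC Ht) (nattC Hu).
Qed.

Lemma ncopair_natt {M N P} {t : natt M P} {u : natt N P} :
  is_module P -> is_natt t -> is_natt u -> is_natt (ncopair t u).
Proof.
move=> HP Ht Hu; split=> [Y [a b] [a' b']|X Y f m]; rewrite /ncopair /=.
  by rewrite (nattD Ht) (nattD Hu) addrACA.
by rewrite (nattC Ht) (nattC Hu) (mactD HP).
Qed.

Lemma msum_fgproj {M N} : is_fgproj M -> is_fgproj N -> is_fgproj (msum M N).
Proof.
move=> [HM [m1 [Xs1 [s1 [r1 [Hsr1 Hsum1]]]]]] [HN [m2 [Xs2 [s2 [r2 [Hsr2 Hsum2]]]]]].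
split; first exact: msum_module.
pose Xs j := match split j with inl a => Xs1 a | inr b => Xs2 b end.
pose s j := match split j as sj return natt (msum M N)
    (repr (match sj with inl a => Xs1 a | inr b => Xs2 b end)) with
  | inl a => ncomp (s1 a) (nfst M N) | inr b => ncomp (s2 b) (nsnd M N) end.
pose r j := match split j as sj return natt
    (repr (match sj with inl a => Xs1 a | inr b => Xs2 b end)) (msum M N) with
  | inl a => ncomp (ninl M N) (r1 a) | inr b => ncomp (ninr M N) (r2 b) end.
exists (m1 + m2)%N, Xs, s, r; split.
  move=> j; rewrite /s /r /Xs; case: (split j) => [a|b] /=.
    have [Hs Hr] := Hsr1 a.
    by split; [apply: ncomp_natt Hs (nfst_natt M N) | apply: ncomp_natt (ninl_natt M N HN) Hr].
  have [Hs Hr] := Hsr2 b.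
  by split; [apply: ncomp_natt Hs (nsnd_natt M N) | apply: ncomp_natt (ninr_natt M N HM) Hr].
move=> Y [x y]; rewrite big_split_ord /=.
rewrite (eq_bigr (fun i => (r1 i Y (s1 i Y x), 0))); last first.
  by move=> i _; rewrite /r /s /Xs (unsplitK (inl i)).
rewrite (eq_bigr (fun i => (0, r2 i Y (s2 i Y y)))); last first.
  by move=> i _; rewrite /r /s /Xs (unsplitK (inr i)).
by rewrite !sum_pair !big1_eq Hsum1 Hsum2 pairD addr0 add0r.
Qed.

Fixpoint osum m : ('I_m -> pmod C) -> pmod C :=
  if m is m'.+1 then fun T => msum (T ord0) (osum m' (fun j => T (lift ord0 j)))
  else fun _ => zmod0.
Arguments osum {m}.

Fixpoint osum_pair P m :
    forall T : 'I_m -> pmod C, (forall j, natt P (T j)) -> natt P (osum T) :=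
  if m is m'.+1 then fun T s => npair (s ord0) (osum_pair P m' _ (fun j => s (lift ord0 j)))
  else fun T s => zero_natt _ _.
Arguments osum_pair {P m T}.

Fixpoint osum_copair P m :
    forall T : 'I_m -> pmod C, (forall j, natt (T j) P) -> natt (osum T) P :=
  if m is m'.+1 then fun T r => ncopair (r ord0) (osum_copair P m' _ (fun j => r (lift ord0 j)))
  else fun T r => zero_natt _ _.
Arguments osum_copair {P m T}.

Lemma osum_pair_natt {P m} {T : 'I_m -> pmod C} {s : forall j, natt P (T j)} :
  (forall j, is_natt (s j)) -> is_natt (osum_pair s).
Proof.
elim: m T s => [|m IH] T s Hs /=; first exact: (zero_natt_natt zmod0_module).
exact: (npair_natt (Hs ord0) (IH _ _ (fun j => Hs _))).
Qed.

Lemma osum_copair_natt {P m} {T : 'I_m -> pmod C} {r : forall j, natt (T j) P} :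
  is_module P -> (forall j, is_natt (r j)) -> is_natt (osum_copair r).
Proof.
move=> HP; elim: m T r => [|m IH] T r Hr /=; first exact: (zero_natt_natt HP).
exact: (ncopair_natt HP (Hr ord0) (IH _ _ (fun j => Hr _))).
Qed.

Lemma osum_copair_pair P m (T : 'I_m -> pmod C) (s : forall j, natt P (T j))
    (r : forall j, natt (T j) P) Y x :
  osum_copair r Y (osum_pair s Y x) = \sum_(j < m) r j Y (s j Y x).
Proof.
elim: m T s r => [|m IH] T s r /=; first by rewrite big_ord0.
by rewrite big_ord_recl /ncopair /npair /= IH.
Qed.

End Sums.
Arguments osum {C m}.
Arguments osum_pair {C P m T}.
Arguments osum_copair {C P m T}.

Section Resolutions.
Context {C : precat}.
Implicit Types M N P Q : pmod C.

Lemma in_mod_module {n N} : in_mod n N -> is_module N.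
Proof. by case. Qed.

Lemma exseq_mono {m n X d N e} : leinf m n -> @exseq C n X d N e -> exseq m d e.
Proof.
move=> hmn [Hd He Hs H0 Hk]; split=> // [k hk|hk|k hk];
  [apply: Hd | apply: H0 | apply: Hk]; exact: (leinf_ltn hmn hk).
Qed.

Lemma in_mod_mono {m n N} : leinf m n -> in_mod n N -> in_mod m N.
Proof.
move=> hmn /in_modE [HN [X [d [e [hX Hex]]]]]; apply/in_modE; split=> //.
exists X, d, e; split; last exact: (exseq_mono hmn Hex).
by move=> k hk; apply: hX; exact: (leinf_len hmn hk).
Qed.

Lemma in_mod_pred {n N} : in_mod (NFin n.+1) N -> in_mod (NFin n) N.
Proof. by apply: in_mod_mono; exact: leqnSn. Qed.

Lemma in_mod_fin {m N} : in_mod NInf N -> in_mod (NFin m) N.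
Proof. exact: in_mod_mono. Qed.

Lemma in_mod_iso {n N N'} (t : natt N N') :
  is_module N' -> is_natt t -> natt_inj t -> natt_surj t -> in_mod n N -> in_mod n N'.
Proof.
move=> HN' Ht Hi Hs /in_modE [HN [X [d [e [hX [Hd He Hse H0 Hk]]]]]].
apply/in_modE; split=> //; exists X, d, (ncomp t e); split=> //; split=> //.
- exact: ncomp_natt.
- exact: ncomp_surj.
- move=> h0 Y x; rewrite -H0 // /ncomp; split=> [/Hi //|->]; exact: (natt0 Ht Y).
Qed.

Lemma fgproj_in_mod {n P} : is_fgproj P -> in_mod n P.
Proof.
move=> HP; apply/in_modE; split; first exact: (proj1 HP).
exists (fun k => if k is 0 then P else zmod0), (fun k => zero_natt _ _), (fun Y x => x).
split; first by move=> [|k] _ //; exact: zmod0_fgproj.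
split=> [[|k] _||Y x|_ Y x|k _ Y x].
- exact: (zero_natt_natt (proj1 HP)).
- exact: (zero_natt_natt zmod0_module).
- by [].
- by exists x.
- by split=> [->|[y <-]] //; exists 0.
- by split=> // _; exists 0; rewrite [x](zmod0_eq Y).
Qed.

Lemma in_mod_cover {n N} :
  in_mod n N -> exists P (e : natt P N), [/\ is_fgproj P, is_natt e & natt_surj e].
Proof.
move=> /in_modE [HN [X [d [e [hX [_ He Hs _ _]]]]]]; exists (X 0%N), e; split=> //.
by apply: hX; case: n.
Qed.

Lemma in_mod0_intro {N P} {e : natt P N} :
  is_module N -> is_fgproj P -> is_natt e -> natt_surj e -> in_mod (NFin 0) N.
Proof.
move=> HN HP He Hs; apply/in_modE; split=> //.
by exists (fun _ => P), (fun _ => zero_natt _ _), e.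
Qed.

Lemma exseq_shift {n X d N e} (He : is_natt e) :
  is_module N -> @exseq C (NFin n.+1) X d N e ->
  exseq (NFin n) (fun k => d k.+1) (kerlift He (d 0%N)).
Proof.
move=> HN [Hd _ Hs H0 Hk].
have Hed Y y : e Y (d 0%N Y y) = 0 by apply/(H0 isT); exists y.
split=> [k hk|||hn Y x|k hk].
- exact: Hd.
- exact: (kerlift_natt He HN (Hd 0%N isT) Hed).
- move=> Y x; have [y hy] := (H0 isT Y (sval x)).1 (kerP x).
  by exists y; apply: sval_ker_inj; rewrite kerliftK ?Hed.
- by rewrite ker_eq0 kerliftK ?Hed //; exact: Hk.
- exact: Hk.
Qed.

Lemma in_modS_elim {n N} : in_mod (NFin n.+1) N ->
  exists P (e : natt P N) (He : is_natt e),
    [/\ is_fgproj P, natt_surj e & in_mod (NFin n) (kermod He)].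
Proof.
move=> /in_modE [HN [X [d [e [hX Hex]]]]]; have [_ He Hs _ _] := Hex.
have HX0 : is_fgproj (X 0%N) by exact: hX.
exists (X 0%N), e, He; split=> //; apply/in_modE.
split; first exact: (kermod_module He HN (proj1 HX0)).
exists (fun k => X k.+1), (fun k => d k.+1), (kerlift He (d 0%N)).
by split=> [k hk|]; [exact: hX | exact: exseq_shift].
Qed.

Lemma in_modS_intro {n N P} {e : natt P N} (He : is_natt e) :
  is_module N -> is_fgproj P -> natt_surj e -> in_mod (NFin n) (kermod He) ->
  in_mod (NFin n.+1) N.
Proof.
move=> HN HP Hs /in_modE [HK [Q [dq [eq [hQ [Hdq Heq Hsq Hq0 Hqk]]]]]].
apply/in_modE; split=> //.
pose X k := if k is k'.+1 then Q k' else P.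
pose d k : natt (Q k) (X k) := if k is k'.+1 then dq k' else ncomp (kerinc He) eq.
exists X, d, e; split; first by case.
split=> // [[|k] hk|_ Y x|[|k] hk Y x] /=.
- exact: (ncomp_natt (kerinc_natt He HN) Heq).
- exact: Hdq.
- split=> [hx|[y <-]]; last exact: kerP.
  have [y hy] := Hsq Y (insker (nattD He Y) x).
  by exists y; rewrite /d /ncomp /kerinc hy inskerK.
- by rewrite /d /ncomp /kerinc -ker_eq0; exact: Hq0.
- exact: Hqk.
Qed.

End Resolutions.

Section Closure.
Context {C : precat}.
Hypothesis pcomp1l : forall X Y (f : phom C X Y), pcomp (pid Y) f = f.
Implicit Types M N P Q : pmod C.

(* By Yoneda it suffices to lift the images of the identities. *)
Lemma fgproj_lift {P M N} {f : natt P N} {g : natt M N} :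
  is_fgproj P -> is_module M -> is_natt f -> is_natt g -> natt_surj g ->
  exists h : natt P M, is_natt h /\ forall Y x, g Y (h Y x) = f Y x.
Proof.
move=> [HP [m [Xs [s [r [Hsr Hsum]]]]]] HM Hf Hg Hs.
have lift1 j : {a : mob M (Xs j) | g _ a = f _ (r j _ (pid (Xs j)))}.
  exact/constructive_indefinite_description/Hs.
exists (fun Y x => \sum_(j < m) mact M (s j Y x) (sval (lift1 j))); split.
  split=> [Y x x'|X Y f' x].
    rewrite -big_split /=; apply: eq_bigr => j _.
    by rewrite (nattD (proj1 (Hsr j))) (mactDl HM).
  rewrite (mact_sum HM); apply: eq_bigr => j _.
  by rewrite (nattC (proj1 (Hsr j))) /= (mactM HM).
move=> Y x; rewrite (natt_sum Hg) -{2}(Hsum Y x) (natt_sum Hf); apply: eq_bigr => j _.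
by rewrite (nattC Hg) (proj2_sig (lift1 j)) -(nattC Hf) -(nattC (proj2 (Hsr j))) /= pcomp1l.
Qed.

Section HorseshoeStep.
Context {A W D R R' : pmod C} {i : natt A W} {p : natt W D}.
Context {e : natt R A} {e' : natt R' D} {l : natt R' W}.
Hypotheses (HA : is_module A) (HW : is_module W) (HR' : is_module R').
Hypotheses (Hip : is_ses i p) (He : is_natt e) (He' : is_natt e') (Hl : is_natt l).
Hypotheses (Hse : natt_surj e) (Hse' : natt_surj e') (Hlp : forall Y x, p Y (l Y x) = e' Y x).

Definition horseshoe_cover : natt (msum R R') W := ncopair (ncomp i e) l.

Lemma horseshoe_cover_natt : is_natt horseshoe_cover.
Proof. by case: Hip => Hi _ _ _ _; apply: ncopair_natt => //; exact: ncomp_natt. Qed.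

Lemma horseshoe_cover_surj : natt_surj horseshoe_cover.
Proof.
case: Hip => _ Hp _ _ Hex Y w; have [c hc] := Hse' Y (p Y w).
have /Hex [a ha] : p Y (w - l Y c) = 0 by rewrite (nattB Hp) Hlp hc subrr.
by have [r hr] := Hse Y a; exists (r, c); rewrite /horseshoe_cover /ncopair /ncomp /= hr ha subrK.
Qed.

Let Hc := horseshoe_cover_natt.

Lemma horseshoe_kernel_ses :
  is_ses (kerlift Hc (ncomp (ninl R R') (kerinc He)))
         (kerlift He' (ncomp (nsnd R R') (kerinc Hc))).
Proof.
case: Hip => Hi Hp Hinj Hsp Hex.
have HD : is_module D := natt_surj_module HW Hp Hsp.
have Hi0 Y a : horseshoe_cover Y (ncomp (ninl R R') (kerinc He) Y a) = 0.
  by rewrite /horseshoe_cover /ncopair /ncomp /= (kerP a) (natt0 Hi) (natt0 Hl) addr0.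
have Hp0 Y w : e' Y (ncomp (nsnd R R') (kerinc Hc) Y w) = 0.
  rewrite /ncomp /nsnd /kerinc -Hlp.
  have := kerP w; rewrite /horseshoe_cover /ncopair /ncomp; case: (sval w) => [r c] /= h.
  have -> : l Y c = - i Y (e Y r) by apply/eqP; rewrite -addr_eq0 addrC h.
  by rewrite (nattN Hp); apply/eqP; rewrite oppr_eq0; apply/eqP/Hex; exists (e Y r).
split.
- apply: (kerlift_natt Hc HW _ Hi0); apply: ncomp_natt (ninl_natt R R' HR') (kerinc_natt He HA).
- apply: (kerlift_natt He' HD _ Hp0).
  exact: (ncomp_natt (nsnd_natt R R') (kerinc_natt Hc HW)).
- by move=> Y a /ker_eq0; rewrite kerliftK // => -[] /ker_eq0.
- move=> Y c; have /Hex [a0 ha0] : p Y (l Y (sval c)) = 0 by rewrite Hlp (kerP c).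
  have [r hr] := Hse Y a0.
  have Hw : horseshoe_cover Y (- r, sval c) = 0.
    by rewrite /horseshoe_cover /ncopair /ncomp /= (nattN He) (nattN Hi) hr ha0 addNr.
  exists (insker (nattD Hc Y) (- r, sval c)); apply: sval_ker_inj.
  by rewrite kerliftK ?Hp0 // /ncomp /nsnd /kerinc inskerK.
- move=> Y w; rewrite ker_eq0 kerliftK ?Hp0 //; split=> [h0|[a <-]].
    have h0' : (sval w).2 = 0 := h0.
    have hw : e Y (sval w).1 = 0.
      apply: Hinj; have := kerP w.
      by rewrite /horseshoe_cover /ncopair /ncomp h0' (natt0 Hl) addr0.
    exists (insker (nattD He Y) (sval w).1); apply: sval_ker_inj; rewrite kerliftK ?Hi0 //.
    by rewrite /ncomp /ninl /kerinc inskerK // -h0'; case: (sval w).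
  by rewrite /ncomp /nsnd /kerinc kerliftK ?Hi0.
Qed.

End HorseshoeStep.

Lemma in_mod_ext_fin {n} {A W D : pmod C} {i : natt A W} {p : natt W D} :
  is_module W -> is_ses i p -> in_mod (NFin n) A -> in_mod (NFin n) D -> in_mod (NFin n) W.
Proof.
elim: n A W D i p => [|n IH] A W D i p HW Hip HA HD; have [Hi Hp _ Hsp _] := Hip.
  have [R [e [HR He Hse]]] := in_mod_cover HA.
  have [R' [e' [HR' He' Hse']]] := in_mod_cover HD.
  have [l [Hl Hlp]] := fgproj_lift HR' HW He' Hp Hsp.
  exact: in_mod0_intro HW (msum_fgproj HR HR') (horseshoe_cover_natt HW Hip He Hl)
    (horseshoe_cover_surj Hip Hse Hse' Hlp).
have [R [e [He [HR Hse HKA]]]] := in_modS_elim HA.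
have [R' [e' [He' [HR' Hse' HKD]]]] := in_modS_elim HD.
have [l [Hl Hlp]] := fgproj_lift HR' HW He' Hp Hsp.
have HRR' := msum_fgproj HR HR'.
pose Hc := horseshoe_cover_natt HW Hip He Hl.
apply: (in_modS_intro Hc HW HRR' (horseshoe_cover_surj Hip Hse Hse' Hlp)).
apply: IH (HKA) (HKD).
  exact: (kermod_module Hc HW (proj1 HRR')).
exact: (horseshoe_kernel_ses (in_mod_module HA) HW (proj1 HR') Hip He He' Hl Hse Hlp).
Qed.

(* The kernel of the cover R -> W -> N is an extension of ker p by the kernel of R -> W. *)
Lemma in_mod_quotient {n W N} {p : natt W N} (Hp : is_natt p) :
  is_module N -> natt_surj p -> in_mod (NFin n) (kermod Hp) -> in_mod (NFin n.+1) W ->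
  in_mod (NFin n.+1) N.
Proof.
move=> HN Hsp HK HW; have [R [e [He [HR Hse HKe]]]] := in_modS_elim HW.
have HWm := in_mod_module HW.
have Hq := ncomp_natt Hp He.
apply: (in_modS_intro Hq HN HR (ncomp_surj Hsp Hse)).
have He0 Y a : ncomp p e Y (kerinc He Y a) = 0 by rewrite /ncomp /kerinc (kerP a) (natt0 Hp).
have Hq0 Y b : p Y (ncomp e (kerinc Hq) Y b) = 0 by exact: (kerP b).
apply: (in_mod_ext_fin (i := kerlift Hq (kerinc He)) (p := kerlift Hp (ncomp e (kerinc Hq)))
  _ _ HKe HK).
  exact: (kermod_module Hq HN (proj1 HR)).
split.
- exact: (kerlift_natt Hq HN (kerinc_natt He HWm) He0).
- exact: (kerlift_natt Hp HN (ncomp_natt He (kerinc_natt Hq HN)) Hq0).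
- by move=> Y a /ker_eq0; rewrite kerliftK // => /ker_eq0.
- move=> Y w; have [y hy] := Hse Y (sval w).
  have hy0 : ncomp p e Y y = 0 by rewrite /ncomp hy (kerP w).
  exists (insker (nattD Hq Y) y); apply: sval_ker_inj.
  by rewrite kerliftK // /ncomp /kerinc inskerK.
- move=> Y b; rewrite ker_eq0 kerliftK //; split=> [hb|[a <-]].
    exists (insker (nattD He Y) (sval b)); apply: sval_ker_inj.
    by rewrite kerliftK // /kerinc inskerK.
  by rewrite /ncomp /kerinc kerliftK ?(kerP a) ?(natt0 Hp).
Qed.

Lemma in_mod_resolved_fin {n X d N e} :
  is_module N -> @exseq C (NFin n) X d N e ->
  (forall k, (k <= n)%N -> in_mod (NFin n) (X k)) -> in_mod (NFin n) N.
Proof.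
elim: n X d N e => [|n IH] X d N e HN Hex HX; have [_ He Hse _ _] := Hex.
  have [R [r [HR Hr Hsr]]] := in_mod_cover (HX 0%N isT).
  exact: (in_mod0_intro HN HR (ncomp_natt He Hr) (ncomp_surj Hse Hsr)).
have HX0 := HX 0%N isT.
apply: (in_mod_quotient He HN Hse _ HX0).
apply: (IH _ _ _ _ _ (exseq_shift He HN Hex)).
  exact: (kermod_module He HN (in_mod_module HX0)).
move=> k hk; exact: (in_mod_pred (HX k.+1 hk)).
Qed.

(* A retract P of T is resolved by the periodic sequence ... -> T -> T -> P,
   alternating 1 - sr and sr. *)
Lemma retract_exseq n {P T} {s : natt P T} {r : natt T P} :
  is_module T -> is_natt s -> is_natt r -> (forall Y x, r Y (s Y x) = x) ->
  @exseq C n (fun _ => T)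
    (fun k => if odd k then ncomp s r else (fun Y x => x - s Y (r Y x))) P r.
Proof.
move=> HT Hs Hr Hrs.
have Hsr : is_natt (ncomp s r) := ncomp_natt Hs Hr.
have H1sr : is_natt (fun Y (x : mob T Y) => x - s Y (r Y x)).
  split=> [Y x x'|X Y f x]; first by rewrite (nattD Hr) (nattD Hs) opprD addrACA.
  by rewrite (mactB HT) (nattC Hr) (nattC Hs).
have srK Y x : s Y (r Y (s Y (r Y x))) = s Y (r Y x) by rewrite Hrs.
split=> [k _|//|Y x|_ Y x|k _ Y x] /=.
- by case: (odd k).
- by exists (s Y x).
- split=> [h|[y <-]]; last by rewrite (nattB Hr) Hrs subrr.
  by exists x; rewrite h (natt0 Hs) subr0.
- case: (odd k); rewrite /= /ncomp; split.
  + by move=> h; exists x; rewrite h subr0.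
  + by move=> [y <-]; rewrite (nattB Hr) (nattB Hs) srK subrr.
  + by move=> h; exists x; apply/eqP; rewrite eq_sym -subr_eq0 h.
  + by move=> [y <-]; rewrite srK subrr.
Qed.

Lemma in_mod_retract_fin {n P T} {s : natt P T} {r : natt T P} :
  is_module P -> is_natt s -> is_natt r -> (forall Y x, r Y (s Y x) = x) ->
  in_mod (NFin n) T -> in_mod (NFin n) P.
Proof.
move=> HP Hs Hr Hrs HT.
have Hex := retract_exseq (NFin n) (in_mod_module HT) Hs Hr Hrs.
exact: (in_mod_resolved_fin HP Hex (fun _ _ => HT)).
Qed.

Section Pullback.
Context {N P P' : pmod C} {e : natt P N} {e' : natt P' N}.
Hypotheses (HN : is_module N) (HP : is_module P) (HP' : is_module P').
Hypotheses (He : is_natt e) (He' : is_natt e').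

Definition pullback_diff : natt (msum P P') N := fun Y q => e Y q.1 - e' Y q.2.

Lemma pullback_diff_natt : is_natt pullback_diff.
Proof.
split=> [Y [a b] [a' b']|X Y f [a b]]; rewrite /pullback_diff /=.
  by rewrite (nattD He) (nattD He') opprD addrACA.
by rewrite (nattC He) (nattC He') (mactB HN).
Qed.

Let Hpb := pullback_diff_natt.

Lemma pullbackP Y (w : mob (kermod Hpb) Y) : e Y (sval w).1 = e' Y (sval w).2.
Proof. by apply/eqP; rewrite -subr_eq0; apply/eqP; exact: (kerP w). Qed.

Lemma pullback_ses : natt_surj e' ->
  is_ses (kerlift Hpb (ncomp (ninr P P') (kerinc He'))) (ncomp (nfst P P') (kerinc Hpb)).
Proof.
move=> Hse'.
have Hi0 Y a : pullback_diff Y (ncomp (ninr P P') (kerinc He') Y a) = 0.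
  by rewrite /pullback_diff /ncomp /ninr /kerinc /= (kerP a) (natt0 He) subr0.
split.
- exact: (kerlift_natt Hpb HN (ncomp_natt (ninr_natt P P' HP) (kerinc_natt He' HN)) Hi0).
- exact: (ncomp_natt (nfst_natt P P') (kerinc_natt Hpb HN)).
- by move=> Y a /ker_eq0; rewrite kerliftK // => -[] /ker_eq0.
- move=> Y x; have [q hq] := Hse' Y (e Y x).
  exists (insker (nattD Hpb Y) (x, q)).
  by rewrite /ncomp /nfst /kerinc inskerK // /pullback_diff /= hq subrr.
- move=> Y w; split=> [h0|[a <-]]; last by rewrite /ncomp /nfst /kerinc kerliftK ?Hi0.
  have h0' : (sval w).1 = 0 := h0.
  have hw : e' Y (sval w).2 = 0 by rewrite -pullbackP h0' (natt0 He).
  exists (insker (nattD He' Y) (sval w).2); apply: sval_ker_inj; rewrite kerliftK //.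
  by rewrite /ncomp /ninr /kerinc inskerK //; move: h0'; case: (sval w) => a b /= ->.
Qed.

(* A lift l of e' along e splits off ker e from the pullback, via (a, b) |-> a - l b. *)
Section KernelRetract.
Context {l : natt P' P}.
Hypotheses (Hl : is_natt l) (Hlp : forall Y x, e Y (l Y x) = e' Y x).

Definition pullback_retr : natt (kermod Hpb) P := fun Y w => (sval w).1 - l Y (sval w).2.

Lemma pullback_retr_natt : is_natt pullback_retr.
Proof.
split=> [Y w w'|X Y f w]; rewrite /pullback_retr.
  rewrite !sval_kerD; case: (sval w) => a b; case: (sval w') => a' b' /=.
  by rewrite (nattD Hl) opprD addrACA.
by rewrite (kermod_act Hpb HN) /=; case: (sval w) => a b /=; rewrite (nattC Hl) (mactB HP).
Qed.

Lemma pullback_retr0 Y w : e Y (pullback_retr Y w) = 0.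
Proof. by rewrite /pullback_retr (nattB He) Hlp pullbackP subrr. Qed.

Lemma pullback_retract :
  [/\ is_natt (kerlift Hpb (ncomp (ninl P P') (kerinc He))),
      is_natt (kerlift He pullback_retr) &
      forall Y x, kerlift He pullback_retr Y (kerlift Hpb (ncomp (ninl P P') (kerinc He)) Y x) = x].
Proof.
have Hs0 Y a : pullback_diff Y (ncomp (ninl P P') (kerinc He) Y a) = 0.
  by rewrite /pullback_diff /ncomp /ninl /kerinc /= (kerP a) (natt0 He') subr0.
split.
- exact: (kerlift_natt Hpb HN (ncomp_natt (ninl_natt P P' HP') (kerinc_natt He HN)) Hs0).
- exact: (kerlift_natt He HN pullback_retr_natt pullback_retr0).
- move=> Y a; apply: sval_ker_inj; rewrite kerliftK ?pullback_retr0 // /pullback_retr kerliftK //.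
  by rewrite /ncomp /ninl /kerinc /= (natt0 Hl) subr0.
Qed.

End KernelRetract.
End Pullback.

(* Schanuel's lemma: compare e with a cover e' whose kernel is in mod_n. *)
Lemma in_mod_syzygy {n N P} {e : natt P N} (He : is_natt e) :
  is_module N -> is_fgproj P -> natt_surj e -> in_mod (NFin n.+1) N ->
  in_mod (NFin n) (kermod He).
Proof.
move=> HN HP Hse HNn; have HPm := proj1 HP.
have [P' [e' [He' [HP' Hse' HK']]]] := in_modS_elim HNn.
pose Hpb := pullback_diff_natt HN He He'.
have HW := kermod_module Hpb HN (msum_module HPm (proj1 HP')).
have HW' := in_mod_ext_fin HW (pullback_ses HN HPm He He' Hse') HK' (fgproj_in_mod HP).
have [l [Hl Hlp]] := fgproj_lift HP' HPm He' He Hse.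
have [Hs Hr Hrs] := pullback_retract HN HPm (proj1 HP') He He' Hl Hlp.
exact: (in_mod_retract_fin (kermod_module He HN HPm) Hs Hr Hrs HW').
Qed.

Definition in_mod_every N := forall m, in_mod (NFin m) N.

Record epi_onto N :=
  EpiOnto { epi_src : pmod C; epi_map : natt epi_src N; epi_natt : is_natt epi_map }.
Arguments epi_src {N}.
Arguments epi_map {N}.
Arguments epi_natt {N}.

Lemma in_mod_every_cover {N} : in_mod_every N ->
  exists c : epi_onto N,
    [/\ is_fgproj (epi_src c), natt_surj (epi_map c) & in_mod_every (kermod (epi_natt c))].
Proof.
move=> HN; have [P [e [HP He Hse]]] := in_mod_cover (HN 0%N).
exists (EpiOnto _ _ _ He); split=> // m.
exact: (in_mod_syzygy He (in_mod_module (HN 0%N)) HP Hse (HN m.+1)).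
Qed.

Section InfiniteResolution.
Variable N0 : pmod C.
Hypothesis HN0 : in_mod_every N0.

Definition next_cover (s : {N | in_mod_every N}) :=
  constructive_indefinite_description _ (in_mod_every_cover (proj2_sig s)).

Definition next_syzygy (s : {N | in_mod_every N}) : {N | in_mod_every N} :=
  exist _ (kermod (epi_natt (sval (next_cover s))))
    (let: And3 _ _ Hc := proj2_sig (next_cover s) in Hc).

Fixpoint syzygy k : {N | in_mod_every N} :=
  if k is k'.+1 then next_syzygy (syzygy k') else exist _ N0 HN0.

Let cover k := sval (next_cover (syzygy k)).
Let Pk k := epi_src (cover k).
Let ek k : natt (Pk k) (sval (syzygy k)) := epi_map (cover k).
Let dk k : natt (Pk k.+1) (Pk k) := ncomp (kerinc (epi_natt (cover k))) (ek k.+1).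

Lemma cover_spec k :
  [/\ is_fgproj (Pk k), natt_surj (ek k) & in_mod_every (kermod (epi_natt (cover k)))].
Proof. exact: (proj2_sig (next_cover (syzygy k))). Qed.

Lemma cover_exact k : exact_at (dk k) (ek k).
Proof.
move=> Y x; split=> [hx|[y <-]]; last exact: (kerP (ek k.+1 Y y)).
have [_ Hs _] := cover_spec k.+1.
have [y hy] := Hs Y (insker (nattD (epi_natt (cover k)) Y) x).
by exists y; rewrite /dk /ncomp /kerinc hy inskerK.
Qed.

Lemma in_mod_every_inf : in_mod NInf N0.
Proof.
apply/in_modE; split; first exact: (in_mod_module (HN0 0%N)).
exists Pk, dk, (ek 0%N); split=> [k _|]; first by case: (cover_spec k).
split=> [k _|||_|k _ Y x].
- have HNk := in_mod_module (proj2_sig (syzygy k) 0%N).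
  exact: (ncomp_natt (kerinc_natt _ HNk) (epi_natt (cover k.+1))).
- exact: (epi_natt (cover 0%N)).
- by case: (cover_spec 0%N).
- exact: (cover_exact 0).
- rewrite /dk /ncomp /kerinc -ker_eq0; exact: (cover_exact k.+1).
Qed.

End InfiniteResolution.

Lemma in_mod_resolved {n X d N e} :
  is_module N -> @exseq C n X d N e ->
  (forall k, len_inf k n -> in_mod n (X k)) -> in_mod n N.
Proof.
case: n => [n|] HN Hex HX; first exact: (in_mod_resolved_fin HN Hex HX).
apply: in_mod_every_inf => m.
apply: (in_mod_resolved_fin HN (exseq_mono (m := NFin m) _ Hex)) => //.
by move=> k _; apply: in_mod_fin; exact: HX.
Qed.

Lemma in_mod_ext {n} {A W D : pmod C} {i : natt A W} {p : natt W D} :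
  is_module W -> is_ses i p -> in_mod n A -> in_mod n D -> in_mod n W.
Proof.
case: n => [n|] HW Hip HA HD; first exact: (in_mod_ext_fin HW Hip HA HD).
by apply: in_mod_every_inf => m; exact: (in_mod_ext_fin HW Hip (in_mod_fin HA) (in_mod_fin HD)).
Qed.

Lemma in_mod_retract {n P T} {s : natt P T} {r : natt T P} :
  is_module P -> is_natt s -> is_natt r -> (forall Y x, r Y (s Y x) = x) ->
  in_mod n T -> in_mod n P.
Proof.
move=> HP Hs Hr Hrs HT.
exact: (in_mod_resolved HP (retract_exseq n (in_mod_module HT) Hs Hr Hrs) (fun _ _ => HT)).
Qed.

Lemma osum_in_mod {n m} {T : 'I_m -> pmod C} :
  (forall j, in_mod n (T j)) -> in_mod n (osum T).
Proof.
elim: m T => [|m IH] T HT /=; first exact: (fgproj_in_mod zmod0_fgproj).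
have HT0 := HT ord0; have HR := IH _ (fun j => HT (lift ord0 j)).
have HRm := in_mod_module HR.
apply: (in_mod_ext (i := ninl _ _) (p := nsnd _ _) _ _ HT0 HR).
  exact: (msum_module (in_mod_module HT0) HRm).
split=> [||Y a /(congr1 fst) //|Y c|Y [a c]].
- exact: (ninl_natt _ _ HRm).
- exact: nsnd_natt.
- by exists (0, c).
- by split=> [/= ->|[a' [_ <-]]]; first by exists a.
Qed.

Lemma in_mod_summand {n P m} {T : 'I_m -> pmod C}
    (s : forall j, natt P (T j)) (r : forall j, natt (T j) P) :
  is_module P -> (forall j, is_natt (s j) /\ is_natt (r j)) ->
  (forall Y x, \sum_(j < m) r j Y (s j Y x) = x) -> (forall j, in_mod n (T j)) -> in_mod n P.
Proof.
move=> HP Hsr Hsum HT.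
apply: (in_mod_retract HP _ _ _ (osum_in_mod HT)).
- exact: (osum_pair_natt (fun j => proj1 (Hsr j))).
- exact: (osum_copair_natt HP (fun j => proj2 (Hsr j))).
- by move=> Y x; rewrite osum_copair_pair Hsum.
Qed.

End Closure.

Lemma linfunE_linear (K : fieldType) (aT rT : vectType K) (f : aT -> rT) :
  (forall a x y, f (a *: x + y) = a *: f x + f y) -> forall x, linfun f x = f x.
Proof.
move=> Hf x; have Hl : linear f by move=> a u v; exact: Hf.
exact: (lfunE (HB.pack f (GRing.isLinear.Build K aT rT _ f Hl)) x).
Qed.

Lemma linfun_zero (K : fieldType) (aT bT : vectType K) (F : aT -> bT) :
  linfun (fun h : aT => (0 : 'Hom(bT, K^o)) (F h)) = 0.
Proof.
apply/lfunP => h; rewrite linfunE_linear ?zero_lfunE // => a x y.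
by rewrite !zero_lfunE scaler0 addr0.
Qed.

Section Repetitive.
Variables (k : fieldType) (A : kcat k).
Hypothesis HA : is_klinear_cat A.
Local Notation CA := (precat_of A).

Lemma compA {X Y Z W} (h : hom A Z W) (g : hom A Y Z) (f : hom A X Y) :
  comp A h (comp A g f) = comp A (comp A h g) f.
Proof. by case: HA => H _ _ _ _; apply: H. Qed.
Lemma comp1l {X Y} (f : hom A X Y) : comp A (idm A Y) f = f.
Proof. by case: HA => _ H _ _ _; apply: H. Qed.
Lemma comp1r {X Y} (f : hom A X Y) : comp A f (idm A X) = f.
Proof. by case: HA => _ _ H _ _; apply: H. Qed.
Lemma compDl {X Y Z} (g g' : hom A Y Z) (f : hom A X Y) :
  comp A (g + g') f = comp A g f + comp A g' f.
Proof. by case: HA => _ _ _ H _; have := H X Y Z 1 g g' f; rewrite !scale1r. Qed.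
Lemma compDr {X Y Z} (g : hom A Y Z) (f f' : hom A X Y) :
  comp A g (f + f') = comp A g f + comp A g f'.
Proof. by case: HA => _ _ _ _ H; have := H X Y Z 1 g f f'; rewrite !scale1r. Qed.
Lemma comp0l {X Y Z} (f : hom A X Y) : comp A (0 : hom A Y Z) f = 0.
Proof. exact: (addf0 (f := fun g => comp A g f) (fun g g' => compDl g g' f)). Qed.

Lemma CA_comp1l X Y (f : phom CA X Y) : pcomp (pid Y) f = f.
Proof. exact: comp1l. Qed.

Lemma repr_fgproj (Z : ob A) : is_fgproj (repr (C := CA) Z).
Proof.
split.
  split=> /= [X Y f g m|X Y f m m'|X m|X Y Z' g f m].
  - exact: compDr.
  - exact: compDl.
  - exact: comp1r.
  - exact: compA.
exists 1%N, (fun _ => Z), (fun _ Y x => x), (fun _ Y x => x); split=> [j|Y x].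
  by split; split.
by rewrite big_ord1.
Qed.

Variable i : int.

Lemma mem_rsp_same {X Y} (p : amb _ A X Y) : (p \in rsp _ A X Y i i) = (p.2 == 0).
Proof. by rewrite /rsp eqxx memv_ker linfunE_linear // => a [? ?] [? ?]. Qed.

Lemma mem_rsp_next {X Y} (p : amb _ A X Y) : (p \in rsp _ A X Y i (i + 1)) = (p.1 == 0).
Proof.
have i_neq : (i == i + 1) = false by rewrite -[X in X == _]addr0 (inj_eq (addrI i)).
by rewrite /rsp i_neq eqxx memv_ker linfunE_linear // => a [? ?] [? ?].
Qed.

Definition toRi {X Y} (u : hom A X Y) : homR _ A (X, i) (Y, i) := vsproj (rsp _ A X Y i i) (u, 0).
Definition ofRi {X Y} (g : homR _ A (X, i) (Y, i)) : hom A X Y := (vsval g).1.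

Lemma toRi_val {X Y} (u : hom A X Y) : vsval (toRi u) = (u, 0).
Proof. by rewrite vsprojK // mem_rsp_same. Qed.

Lemma toRiK {X Y} : cancel (@toRi X Y) ofRi.
Proof. by move=> u; rewrite /ofRi toRi_val. Qed.

Lemma ofRiK {X Y} : cancel (@ofRi X Y) toRi.
Proof.
move=> g; apply: val_inj => /=; rewrite toRi_val /ofRi.
have /eqP <- : (vsval g).2 == 0 by rewrite -mem_rsp_same; exact: subvsP.
by case: (vsval g).
Qed.

Lemma toRiD {X Y} (u v : hom A X Y) : toRi (u + v) = toRi u + toRi v.
Proof. by rewrite /toRi -raddfD pairD addr0. Qed.

Lemma ofRiD {X Y} (g g' : homR _ A (X, i) (Y, i)) : ofRi (g + g') = ofRi g + ofRi g'.
Proof. by rewrite /ofRi raddfD. Qed.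

Lemma toRiM {X Y Z} (u : hom A Y Z) (v : hom A X Y) :
  compR _ A (X, i) (Y, i) (Z, i) (toRi u) (toRi v) = toRi (comp A u v).
Proof. by rewrite /compR /= !toRi_val /ambcomp /= !linfun_zero addr0. Qed.

Lemma ofRiM {X Y Z} (g : homR _ A (Y, i) (Z, i)) (f : homR _ A (X, i) (Y, i)) :
  ofRi (compR _ A (X, i) (Y, i) (Z, i) g f) = comp A (ofRi g) (ofRi f).
Proof. by rewrite -{1}(ofRiK g) -{1}(ofRiK f) toRiM toRiK. Qed.

Lemma ofRi1 {X} : ofRi (idR _ A (X, i)) = idm A X.
Proof. exact: toRiK. Qed.

(* restrA M is rho_i M transported along the isomorphism A ~ A_i given by toRi;
   pullRi transports back. *)
Definition restrA (M : pmod (RA A)) : pmod CA :=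
  @PMod CA (fun X => mob M (X, i)) (fun X Y u m => @mact (RA A) M (X, i) (Y, i) (toRi u) m).

Definition restrA_natt {M N : pmod (RA A)} (t : natt M N) : natt (restrA M) (restrA N) :=
  fun X => t (X, i).

Lemma restrA_module {M} : is_module M -> is_module (restrA M).
Proof.
move=> HM; split=> /= [X Y f g m|X Y f m m'|X m|X Y Z g f m].
- by rewrite toRiD (mactDl HM).
- exact: (mactD HM).
- exact: (mact1 HM).
- by rewrite -(mactM HM); congr (mact M _ m); exact: (esym (toRiM g f)).
Qed.

Lemma restrA_natt_natt {M N : pmod (RA A)} {t : natt M N} :
  is_natt t -> is_natt (restrA_natt t).
Proof. by move=> Ht; split=> [X|X Y f m]; [exact: (nattD Ht) | exact: (nattC Ht)]. Qed.

Lemma restrA_exseq {n X d N e} : @exseq (RA A) n X d N e ->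
  exseq n (fun k => restrA_natt (d k)) (restrA_natt e).
Proof.
move=> [Hd He Hs H0 Hk]; split=> [j hj|||h Y x|j hj Y x].
- exact: (restrA_natt_natt (Hd j hj)).
- exact: (restrA_natt_natt He).
- by move=> Y; exact: Hs.
- exact: (H0 h).
- exact: (Hk j hj).
Qed.

Lemma restrA_repr_same n Y : in_mod n (restrA (repr (C := RA A) (Y, i))).
Proof.
pose t : natt (repr (C := CA) Y) (restrA (repr ((Y, i) : pob (RA A)))) := fun X u => toRi u.
have Ht : is_natt t by split=> [X u u'|X X' f u]; [exact: toRiD | exact: (esym (toRiM _ _))].
have Hs : natt_surj t by move=> X g; exists (ofRi g); exact: ofRiK.
have HP := repr_fgproj Y.
apply: (in_mod_iso t (natt_surj_module (proj1 HP) Ht Hs) Ht _ Hs (fgproj_in_mod HP)).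
by move=> X u hu; rewrite -(toRiK u); have -> : toRi u = 0 := hu; rewrite /ofRi raddf0.
Qed.

Lemma restrA_repr_next {n Y} : in_mod n (dualrep Y) ->
  in_mod n (restrA (repr (C := RA A) (Y, i + 1))).
Proof.
move=> HD.
pose t : natt (dualrep Y) (restrA (repr ((Y, i + 1) : pob (RA A)))) :=
  fun X ph => vsproj (rsp _ A X Y i (i + 1)) (0, ph).
have t_val X ph : vsval (t X ph) = (0, ph) by rewrite vsprojK // mem_rsp_next.
have Ht : is_natt t.
  split=> [X u u'|X X' f u]; first by rewrite /t -raddfD pairD addr0.
  apply: val_inj; rewrite /= t_val /compR /= vsprojK; last first.
    by rewrite mem_rsp_next /ambcomp /= t_val comp0l.
  by rewrite t_val toRi_val /ambcomp /= comp0l linfun_zero addr0.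
have Hs : natt_surj t.
  move=> X g; exists (vsval g).2; apply: val_inj; rewrite /= t_val.
  have /eqP <- : (vsval g).1 == 0 by rewrite -mem_rsp_next; exact: subvsP.
  by case: (vsval g).
apply: (in_mod_iso t (natt_surj_module (in_mod_module HD) Ht Hs) Ht _ Hs HD).
by move=> X u hu; have := t_val X u; rewrite hu raddf0 => /(congr1 snd).
Qed.

Lemma restrA_repr_other {n Y j} : j != i -> j != i + 1 ->
  in_mod n (restrA (repr (C := RA A) (Y, j))).
Proof.
move=> hji hj1.
have H0 X (g : mob (restrA (repr ((Y, j) : pob (RA A)))) X) : g = 0.
  have rsp0 (v : amb _ A X Y) : v \in rsp _ A X Y i j -> v = 0.
    by rewrite /rsp eq_sym (negbTE hji) (negbTE hj1) memv0 => /eqP.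
  by apply: val_inj; rewrite raddf0; apply: rsp0; exact: subvsP.
have Hs : natt_surj (zero_natt zmod0 (restrA (repr ((Y, j) : pob (RA A))))).
  by move=> X x; exists 0; rewrite (H0 X x).
have HT : is_module (restrA (repr ((Y, j) : pob (RA A)))).
  by split=> *; rewrite [LHS]H0 [RHS]H0.
apply: (in_mod_iso _ HT (zero_natt_natt HT) _ Hs (fgproj_in_mod zmod0_fgproj)).
by move=> X x _; exact: zmod0_eq.
Qed.

Lemma restrA_repr n (Hdual : forall X : ob A, in_mod n (dualrep X)) Y :
  in_mod n (restrA (repr (C := RA A) Y)).
Proof.
case: Y => Y j; have [->|hji] := eqVneq j i; first exact: restrA_repr_same.
have [->|hj1] := eqVneq j (i + 1); first exact: (restrA_repr_next (Hdual Y)).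
exact: (restrA_repr_other hji hj1).
Qed.

Lemma restrA_in_mod {n} (Hdual : forall X : ob A, in_mod n (dualrep X)) {M : pmod (RA A)} :
  in_mod n M -> in_mod n (restrA M).
Proof.
move=> /in_modE [HM [P [d [e [hP Hex]]]]].
apply: (in_mod_resolved CA_comp1l (restrA_module HM) (restrA_exseq Hex)) => j hj.
have [HPm [m [Xs [s [r [Hsr Hsum]]]]]] := hP j hj.
apply: (in_mod_summand CA_comp1l (fun l => restrA_natt (s l)) (fun l => restrA_natt (r l))).
- exact: (restrA_module HPm).
- by move=> l; have [Hs Hr] := Hsr l; split; exact: restrA_natt_natt.
- by move=> Y x; exact: Hsum.
- by move=> l; exact: restrA_repr.
Qed.

Definition pullRi (N : pmod CA) : pmod (RAi A i) :=
  @PMod (RAi A i) (fun X => mob N X) (fun X Y g m => mact N (ofRi g) m).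

Lemma pullRi_module {N} : is_module N -> is_module (pullRi N).
Proof.
move=> HN; split=> /= [X Y f g m|X Y f m m'|X m|X Y Z g f m].
- by rewrite ofRiD (mactDl HN).
- exact: (mactD HN).
- by rewrite ofRi1 (mact1 HN).
- by rewrite ofRiM (mactM HN).
Qed.

Lemma pullRi_natt {M N : pmod CA} {t : natt M N} : is_natt t -> @is_natt _ (pullRi M) (pullRi N) t.
Proof. by move=> Ht; split=> [X|X Y f m]; [exact: (nattD Ht) | exact: (nattC Ht)]. Qed.

Lemma pullRi_fgproj {P} : is_fgproj P -> is_fgproj (pullRi P).
Proof.
move=> [HP [m [Xs [s [r [Hsr Hsum]]]]]]; split; first exact: pullRi_module.
exists m, Xs, (fun j Y x => toRi (s j Y x)), (fun j Y g => r j Y (ofRi g)); split.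
  move=> j; have [Hs Hr] := Hsr j; split; split.
  - by move=> Y x x'; rewrite /= (nattD Hs) toRiD.
  - by move=> X Y g x /=; rewrite (nattC Hs) /= -[in RHS](ofRiK g) toRiM.
  - by move=> Y x x'; rewrite /= ofRiD (nattD Hr).
  - by move=> X Y g x /=; rewrite ofRiM (nattC Hr).
by move=> Y x /=; under eq_bigr do rewrite toRiK; exact: Hsum.
Qed.

Lemma pullRi_in_mod {n N} : in_mod n N -> in_mod n (pullRi N).
Proof.
move=> /in_modE [HN [P [d [e [hP [Hd He Hs H0 Hk]]]]]].
apply/in_modE; split; first exact: pullRi_module.
exists (fun j => pullRi (P j)), d, e; split=> [j hj|]; first exact: (pullRi_fgproj (hP j hj)).
by split=> // [j hj|]; [exact: (pullRi_natt (Hd j hj)) | exact: (pullRi_natt He)].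
Qed.

Lemma rho_in_mod {n} (Hdual : forall X : ob A, in_mod n (dualrep X)) {M : pmod (RA A)} :
  in_mod n M -> in_mod n (rho i M).
Proof.
move=> HM; have HR := pullRi_in_mod (restrA_in_mod Hdual HM).
have Ht : @is_natt _ (pullRi (restrA M)) (rho i M) (fun X m => m).
  by split=> // X Y g m /=; rewrite ofRiK.
apply: (in_mod_iso _ _ Ht _ _ HR) => // [|X x]; last by exists x.
exact: (natt_surj_module (in_mod_module HR) Ht (fun X x => ex_intro _ x erefl)).
Qed.

End Repetitive.

Theorem mainTheorem15 (k : fieldType) (A : kcat k) (n : natinf) :
  is_klinear_cat A -> is_additive_kcat A ->
  (forall X : ob A, in_mod n (dualrep X)) ->
  forall (i : int) (M : pmod (RA A)), in_mod n M -> in_mod n (rho i M).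
Proof. by move=> HA _ Hdual i M; exact: rho_in_mod. Qed.
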